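(* Let $P,Q$ be join-semilattices with a least element. Then: (1) $Q$ is embeddable in $P$ by a join-preserving map (an injective $f$ with $f(x\vee y)=f(x)\vee f(y)$) if and only if $Q$ is embeddable in $P$ by a map preserving finite joins. (2) If $Q$ is embeddable in $P$ by a join-preserving map, then $J(Q)$ is embeddable in $J(P)$ by a map preserving arbitrary joins. Suppose moreover $Q=I_{<\omega}(R)$ for some poset $R$. Then: (3) $Q$ is embeddable in $P$ as a poset if and only if $Q$ is embeddable in $P$ by a map preserving finite joins. (4) $J(Q)$ is embeddable in $J(P)$ as a poset if and only if $J(Q)$ is embeddable in $J(P)$ by a map preserving arbitrary joins. (5) If $\downarrow x$ is finite for every $x\in R$, then $Q$ is embeddable in $P$ as a poset if and only if $J(Q)$ is embeddable in $J(P)$ as a poset.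
   Context: A map preserves finite (resp. arbitrary) joins if $f(\bigvee X)=\bigvee\{f(x):x\in X\}$ for every finite (resp. arbitrary) subset $X$. An ideal is a non-empty up-directed initial segment; $J(\cdot)$ denotes the set of ideals ordered by inclusion. For a poset $R$, $I_{<\omega}(R)$ is the set of finitely generated initial segments $\downarrow A$ ($A\subseteq R$ finite) ordered by inclusion, a join-semilattice with join $=$ union and least element $\emptyset$; $\downarrow x=\{y\in R: y\le x\}$. Embedding as a poset means order-embedding. *)

From HB Require Import structures.
From mathcomp Require Import all_boot all_order.
From mathcomp Require Import boolp classical_sets cardinality.
Import Order.Theory.

Set Implicit Arguments.
Unset Strict Implicit.
Unset Printing Implicit Defensive.

Local Open Scope classical_set_scope.
Local Open Scope order_scope.

Definition is_lub (A : Type) (le : A -> A -> Prop) (X : set A) (a : A) : Prop :=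
  (forall x, X x -> le x a) /\ (forall b, (forall x, X x -> le x b) -> le a b).

Definition is_ideal d (T : porderType d) (I : set T) : Prop :=
  [/\ exists x, I x,
      (forall x y, (y <= x)%O -> I x -> I y) &
      (forall x y, I x -> I y -> exists z, [/\ I z, (x <= z)%O & (y <= z)%O])].

Definition ideal_of d (T : porderType d) := {I : set T | is_ideal I}.

Definition ideal_le d (T : porderType d) (I J : ideal_of T) : Prop :=
  proj1_sig I `<=` proj1_sig J.

Definition fg_downset d (R : porderType d) (A : set R) : Prop :=
  exists s : seq R, A = [set y | exists2 x, x \in s & (y <= x)%O].

(* Q is (order-isomorphic to) I_{<omega}(R), ordered by inclusion. *)
Definition is_Ifin dQ (Q : porderType dQ) dR (R : porderType dR) : Prop :=
  exists phi : Q -> set R,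
    [/\ forall q, fg_downset (phi q),
        forall A, fg_downset A -> exists q, phi q = A &
        forall q1 q2, (q1 <= q2)%O <-> phi q1 `<=` phi q2].

Definition join_preserving dQ (Q : bJoinSemilatticeType dQ)
    dP (P : bJoinSemilatticeType dP) (f : Q -> P) : Prop :=
  forall x y, f (x `|` y)%O = (f x `|` f y)%O.

Definition fin_join_preserving dQ (Q : bJoinSemilatticeType dQ)
    dP (P : bJoinSemilatticeType dP) (f : Q -> P) : Prop :=
  forall s : seq Q, f (\join_(x <- s) x)%O = (\join_(x <- s) f x)%O.

Definition emb_join dQ (Q : bJoinSemilatticeType dQ)
    dP (P : bJoinSemilatticeType dP) : Prop :=
  exists f : Q -> P, injective f /\ join_preserving f.

Definition emb_finjoin dQ (Q : bJoinSemilatticeType dQ)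
    dP (P : bJoinSemilatticeType dP) : Prop :=
  exists f : Q -> P, injective f /\ fin_join_preserving f.

Definition emb_poset dQ (Q : porderType dQ) dP (P : porderType dP) : Prop :=
  exists f : Q -> P, forall x y, (x <= y)%O <-> (f x <= f y)%O.

Definition emb_ideal_poset dQ (Q : porderType dQ) dP (P : porderType dP) : Prop :=
  exists F : ideal_of Q -> ideal_of P,
    forall I J, ideal_le I J <-> ideal_le (F I) (F J).

Definition emb_ideal_join dQ (Q : porderType dQ) dP (P : porderType dP) : Prop :=
  exists F : ideal_of Q -> ideal_of P,
    injective F /\
    forall (X : set (ideal_of Q)) (I : ideal_of Q),
      is_lub (@ideal_le _ Q) X I -> is_lub (@ideal_le _ P) (F @` X) (F I).

From HB Require Import structures.
From mathcomp Require Import all_boot all_order.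
From mathcomp Require Import boolp classical_sets cardinality.
Import Order.Theory.

Set Implicit Arguments.
Unset Strict Implicit.
Unset Printing Implicit Defensive.

Local Open Scope classical_set_scope.
Local Open Scope order_scope.

(* If [f] is injective and join-preserving, no [x != \bot] has [f x <= f \bot], so
   redefining [f \bot := \bot] keeps [f] injective and makes it preserve finite joins.
   Such a map [g] acts on ideals by [I |-> ↓g[I]], which preserves all joins because
   every element of a join of ideals lies below a finite join of their elements.
   When [Q] is I_{<ω}(R), each [q] is the finite join of the [↓a], [a ∈ q], so every
   monotone [h : R -> P] extends to the finite-join-preserving [q |-> ⋁_(a ∈ q) h a];
   for a poset embedding [f], the choice [h a := f ↓a] gives (3).  Ideals of [Q]
   correspond to down-sets of [R], and a poset embedding [F] of ideals becomes
   join-preserving once [G I] is taken to be generated by the [F ↓↓a] with [↓a ∈ I]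
   (4).  For (5), pick [p_a] in [F ↓↓a] but outside [F {q | a ∉ q}]; when each [↓x] is
   finite, [h x := ⋁_(a <= x) p_a] is monotone and its extension to [Q] reflects the
   order. *)

Section Ideals.
Variables (d : Order.disp_t) (T : porderType d).

Lemma ideal_downclosed (I : ideal_of T) x y : y <= x -> sval I x -> sval I y.
Proof. by have [_ I_down _] := svalP I; exact: I_down. Qed.

Lemma ideal_ext (I J : ideal_of T) : sval I = sval J -> I = J.
Proof. by case: I J => [I idI] [J idJ] /= IJ; subst J; rewrite (Prop_irrelevance idI idJ). Qed.

Lemma ideal_le_anti (I J : ideal_of T) : ideal_le I J -> ideal_le J I -> I = J.
Proof. by move=> IJ JI; apply: ideal_ext; rewrite eqEsubset. Qed.

Lemma is_lub_unique (X : set (ideal_of T)) I J :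
  is_lub (@ideal_le _ T) X I -> is_lub (@ideal_le _ T) X J -> I = J.
Proof. by move=> [Iub Imin] [Jub Jmin]; apply: ideal_le_anti; [apply: Imin | apply: Jmin]. Qed.

Lemma is_ideal_down (x : T) : is_ideal [set y | y <= x].
Proof.
split; first by exists x => /=.
  by move=> y z zy /= /(le_trans zy).
by move=> y z yx zx; exists x; split; rewrite /= ?lexx.
Qed.

Definition ideal_down (x : T) : ideal_of T := exist _ _ (is_ideal_down x).

Lemma ideal_down_le x (I : ideal_of T) : ideal_le (ideal_down x) I <-> sval I x.
Proof. by split=> [/(_ x (lexx x)) // | Ix y yx]; exact: ideal_downclosed Ix. Qed.

Lemma is_lub_pair_le (I J : ideal_of T) :
  ideal_le I J -> is_lub (@ideal_le _ T) [set I; J] J.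
Proof. by move=> IJ; split=> [K [->|->] // x // | B]; apply; right. Qed.

End Ideals.

Section JoinIdeals.
Variables (d : Order.disp_t) (L : bJoinSemilatticeType d).

Lemma ideal0 (I : set L) : is_ideal I -> I \bot.
Proof. by case=> -[x Ix] I_down _; exact: I_down (le0x x) Ix. Qed.

Lemma ideal_joins (A : eqType) (I : set L) (s : seq A) (F : A -> L) :
  is_ideal I -> (forall x, x \in s -> I (F x)) -> I (\join_(x <- s) F x).
Proof.
move=> idI; have [_ I_down I_dir] := idI.
elim: s => [|a s IHs] Fs; first by rewrite big_nil; exact: ideal0.
have Ia : I (F a) by apply: Fs; rewrite mem_head.
have Is : I (\join_(x <- s) F x) by apply: IHs => x xs; apply: Fs; rewrite inE xs orbT.
have [z [Iz az sz]] := I_dir _ _ Ia Is.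
by rewrite big_cons; apply: I_down Iz; rewrite leUx az.
Qed.

Definition ideal_span (S : set L) : set L :=
  [set p | exists2 s : seq L, (forall x, x \in s -> S x) & p <= \join_(x <- s) x].

Lemma is_ideal_span S : is_ideal (ideal_span S).
Proof.
split.
- by exists \bot, [::]; rewrite ?big_nil.
- by move=> x y yx [s Ss xs]; exists s => //; exact: le_trans xs.
- move=> x y [s Ss xs] [t St yt]; exists (\join_(z <- s ++ t) z); split.
  + by exists (s ++ t) => // z; rewrite mem_cat => /orP[/Ss|/St].
  + by rewrite big_cat; exact: le_trans xs (leUl _ _).
  + by rewrite big_cat; exact: le_trans yt (leUr _ _).
Qed.

Lemma sub_ideal_span S : S `<=` ideal_span S.
Proof. by move=> x Sx; exists [:: x]; [move=> z; rewrite inE => /eqP-> | rewrite big_seq1]. Qed.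

Lemma ideal_span_min S (I : set L) : is_ideal I -> S `<=` I -> ideal_span S `<=` I.
Proof.
move=> idI SI x [s Ss xs]; have [_ I_down _] := idI.
by apply: I_down xs _; apply: ideal_joins => // z /Ss /SI.
Qed.

Definition span_ideal S : ideal_of L := exist _ _ (is_ideal_span S).

Lemma lub_ideal_sub_span (X : set (ideal_of L)) I :
  is_lub (@ideal_le _ L) X I -> sval I `<=` ideal_span (\bigcup_(J in X) sval J).
Proof.
case=> _ Imin; apply: (Imin (span_ideal _)) => J XJ x Jx.
by apply: sub_ideal_span; exists J.
Qed.

Lemma is_lub_ideal_pair (I J : ideal_of L) :
  is_lub (@ideal_le _ L) [set I; J] (span_ideal (sval I `|` sval J)).
Proof.
split=> [K [->|->] x Kx | B Bub]; first by apply: sub_ideal_span; left.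
  by apply: sub_ideal_span; right.
apply: ideal_span_min (svalP B) _ => x [Ix|Jx].
  by apply: (Bub I) => //; left.
by apply: (Bub J) => //; right.
Qed.

Lemma emb_ideal_join_poset dP (P : porderType dP) :
  emb_ideal_join L P -> emb_ideal_poset L P.
Proof.
case=> F [F_inj F_lub]; exists F => I J; split=> [IJ | FIJ].
  have [FJub _] := F_lub _ _ (is_lub_pair_le IJ).
  by apply: FJub; exists I => //; left.
have FJlub : is_lub (@ideal_le _ P) (F @` [set I; J]) (F J).
  split=> [_ [K [->|->] <-] // | B Bub]; last by apply: Bub; exists J => //; right.
have FK := is_lub_unique (F_lub _ _ (is_lub_ideal_pair I J)) FJlub.
by rewrite -(F_inj _ _ FK) => x Ix; apply: sub_ideal_span; left.
Qed.

End JoinIdeals.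

Section IdealImage.
Variables (dQ dP : Order.disp_t) (Q : porderType dQ) (P : porderType dP) (g : Q -> P).
Hypothesis g_mono : {mono g : x y / x <= y}.

Definition ideal_image (I : set Q) : set P := [set p | exists2 q, I q & p <= g q].

Lemma is_ideal_image I : is_ideal I -> is_ideal (ideal_image I).
Proof.
case=> -[x Ix] I_down I_dir; split; first by exists (g x), x.
  by move=> p p' p'p [q Iq pq]; exists q => //; exact: le_trans pq.
move=> p1 p2 [q1 Iq1 pq1] [q2 Iq2 pq2]; have [z [Iz q1z q2z]] := I_dir _ _ Iq1 Iq2.
exists (g z); split; first by exists z.
  by rewrite (le_trans pq1) ?g_mono.
by rewrite (le_trans pq2) ?g_mono.
Qed.

Definition image_ideal (I : ideal_of Q) : ideal_of P :=
  exist _ _ (is_ideal_image (svalP I)).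

Lemma image_ideal_le I J : ideal_le (image_ideal I) (image_ideal J) <-> ideal_le I J.
Proof.
split=> [IJ q Iq | IJ p [q /IJ Jq pq]]; last by exists q.
have [q' Jq' ] : ideal_image (sval J) (g q) by apply: IJ; exists q.
by rewrite g_mono => qq'; exact: ideal_downclosed Jq'.
Qed.

Lemma image_ideal_inj : injective image_ideal.
Proof. by move=> I J IJ; apply: ideal_le_anti; apply/image_ideal_le; rewrite IJ. Qed.

End IdealImage.

Section JoinMaps.
Variables (dQ dP : Order.disp_t) (Q : bJoinSemilatticeType dQ) (P : bJoinSemilatticeType dP).
Implicit Types f : Q -> P.

Lemma fin_join_preservingE f :
  fin_join_preserving f <-> join_preserving f /\ f \bot = \bot.
Proof.
split=> [fj | [fj f0] s].
  split=> [x y|]; last by have := fj [::]; rewrite !big_nil.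
  by have := fj [:: x; y]; rewrite !big_cons !big_nil !joinx0.
by elim: s => [|x s IHs]; rewrite ?big_nil ?big_cons ?fj ?IHs.
Qed.

Lemma inj_join_preserving_mono f :
  injective f -> join_preserving f -> {mono f : x y / x <= y}.
Proof.
move=> f_inj fj x y; apply/idP/idP => [fxy | xy].
  by apply/join_idPr/f_inj; rewrite fj; apply/join_idPr.
by rewrite -(join_idPr xy) fj leUl.
Qed.

Lemma emb_finjoin_poset : emb_finjoin Q P -> emb_poset Q P.
Proof.
case=> f [f_inj /fin_join_preservingE[fj _]]; exists f => x y.
by rewrite (inj_join_preserving_mono f_inj fj).
Qed.

Section FixBottom.
Variable f : Q -> P.
Hypotheses (f_inj : injective f) (fj : join_preserving f).

Definition fix_bot x := if x == \bot then \bot else f x.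

Lemma fix_bot_inj : injective fix_bot.
Proof.
have f_eq0 x : f x = \bot -> x = \bot.
  by move=> fx0; apply/eqP; rewrite -lex0 -(inj_join_preserving_mono f_inj fj) fx0 le0x.
rewrite /fix_bot => x y.
case: (eqVneq x \bot) => [->|_]; case: (eqVneq y \bot) => [->|_] //.
- by move/esym/f_eq0.
- by move/f_eq0.
- exact: f_inj.
Qed.

Lemma fix_bot_fin_join : fin_join_preserving fix_bot.
Proof.
apply/fin_join_preservingE; split=> [x y|]; last by rewrite /fix_bot eqxx.
rewrite /fix_bot join_eq0.
by case: (eqVneq x \bot) => [->|_]; case: (eqVneq y \bot) => [->|_];
  rewrite ?eqxx /= ?join0x ?joinx0 ?fj.
Qed.

End FixBottom.

Lemma emb_join_finjoin : emb_join Q P <-> emb_finjoin Q P.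
Proof.
split=> [[f [f_inj fj]] | [f [f_inj /fin_join_preservingE[fj _]]]]; last by exists f.
by exists (fix_bot f); split; [exact: fix_bot_inj | exact: fix_bot_fin_join].
Qed.

Lemma emb_join_ideal_join : emb_join Q P -> emb_ideal_join Q P.
Proof.
move/emb_join_finjoin=> [g [g_inj g_fin]].
have [gj _] := (fin_join_preservingE g).1 g_fin.
have g_mono := inj_join_preserving_mono g_inj gj.
exists (image_ideal g_mono); split; first exact: image_ideal_inj.
move=> X I [Iub Imin]; split=> [_ [J XJ <-] | B Bub p [q Iq pq]].
  exact/image_ideal_le/Iub.
have [s sX qs] := lub_ideal_sub_span (conj Iub Imin) Iq.
have gqs : g q <= g (\join_(x <- s) x) by rewrite g_mono.
apply: ideal_downclosed (le_trans pq gqs) _.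
rewrite g_fin; apply: ideal_joins (svalP B) _ => x /sX [J XJ Jx].
by apply: (Bub (image_ideal g_mono J)); [exists J | exists x].
Qed.

End JoinMaps.

Lemma finite_below_seq dR (R : porderType dR) :
  (forall x : R, finite_set [set y | y <= x]) ->
  {below : R -> seq R | forall x y, (y \in below x) = (y <= x)}.
Proof.
move=> finR; exists (fun x => sval (cid ((finite_seqP _).1 (finR x)))) => x y.
case: cid => s /= sE; apply/idP/idP => [ys | yx].
  by have : [set` s] y by []; rewrite -sE.
by have : [set y | y <= x] y by []; rewrite sE.
Qed.

Section FinitelyGeneratedDownsets.
Variables (dR dQ : Order.disp_t) (R : porderType dR) (Q : bJoinSemilatticeType dQ).
Variable phi : Q -> set R.
Hypotheses (phi_fg : forall q, fg_downset (phi q))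
  (phi_onto : forall A, fg_downset A -> exists q, phi q = A)
  (phi_le : forall q1 q2, q1 <= q2 <-> phi q1 `<=` phi q2).

Definition down_seq (s : seq R) : set R := [set y | exists2 x, x \in s & y <= x].

Lemma phi_down_seq s : exists q, phi q = down_seq s.
Proof. by apply: phi_onto; exists s. Qed.

Definition gens q : seq R := sval (cid (phi_fg q)).

Lemma phi_gens q : phi q = down_seq (gens q).
Proof. exact: svalP (cid (phi_fg q)). Qed.

Lemma phi_downclosed q x y : y <= x -> phi q x -> phi q y.
Proof. by rewrite phi_gens => yx [z zs xz]; exists z => //; exact: le_trans xz. Qed.

Lemma phi0 : phi \bot = set0.
Proof.
have [q0 q0E] := phi_down_seq [::].
by apply/seteqP; split=> // a /(phi_le _ q0).1; rewrite ?le0x // q0E => -[].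
Qed.

Lemma phiU q1 q2 : phi (q1 `|` q2) = phi q1 `|` phi q2.
Proof.
have [q3 q3E] := phi_down_seq (gens q1 ++ gens q2).
have q3U : phi q3 `<=` phi q1 `|` phi q2.
  by rewrite q3E !phi_gens => a [x]; rewrite mem_cat => /orP[] xs ax; [left|right]; exists x.
have [le13 le23] : q1 <= q3 /\ q2 <= q3.
  split; apply/phi_le; rewrite q3E phi_gens => a [x xs ax].
    by exists x; rewrite // mem_cat xs.
  by exists x; rewrite // mem_cat xs orbT.
apply/seteqP; split.
  by apply: subset_trans q3U; apply/phi_le; rewrite leUx le13.
have [le1 le2] : phi q1 `<=` phi (q1 `|` q2) /\ phi q2 `<=` phi (q1 `|` q2).
  by split; apply/phi_le; [exact: leUl | exact: leUr].
by move=> a [/le1 | /le2].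
Qed.

Definition principal a : Q := sval (cid (phi_down_seq [:: a])).

Lemma phi_principal a : phi (principal a) = [set y | y <= a].
Proof.
rewrite (svalP (cid (phi_down_seq [:: a]))); apply/seteqP.
by split=> [y [x] | y ya]; [rewrite inE => /eqP-> | exists a; rewrite ?inE].
Qed.

Lemma le_principal a q : principal a <= q <-> phi q a.
Proof.
rewrite phi_le phi_principal.
by split=> [/(_ a (lexx a)) // | qa y ya]; exact: phi_downclosed qa.
Qed.

Lemma principal_homo : {homo principal : a b / a <= b}.
Proof. by move=> a b ab; apply/le_principal; rewrite phi_principal. Qed.

Section Lift.
Variables (dP : Order.disp_t) (P : bJoinSemilatticeType dP) (h : R -> P).
Hypothesis h_homo : {homo h : a b / a <= b}.

Definition lift q : P := \join_(a <- gens q) h a.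

Lemma lift_ub q a : phi q a -> h a <= lift q.
Proof.
rewrite phi_gens => -[x xs ax]; apply: le_trans (h_homo ax) _.
exact: joins_sup_seq.
Qed.

Lemma lift_le q u : (forall a, phi q a -> h a <= u) -> lift q <= u.
Proof.
move=> hu; apply/joinsP_seq => a agens _; apply: hu.
by rewrite phi_gens; exists a.
Qed.

Lemma lift_homo : {homo lift : q1 q2 / q1 <= q2}.
Proof. by move=> q1 q2 /phi_le le12; apply: lift_le => a /le12; exact: lift_ub. Qed.

Lemma lift_fin_join : fin_join_preserving lift.
Proof.
apply/fin_join_preservingE; split=> [q1 q2|].
  apply/le_anti/andP; split; last by rewrite leUx !lift_homo ?leUl ?leUr.
  apply: lift_le => a; rewrite phiU => -[] /lift_ub ha.
    exact: le_trans ha (leUl _ _).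
  exact: le_trans ha (leUr _ _).
by apply/eqP; rewrite -lex0; apply: lift_le => a; rewrite phi0.
Qed.

Lemma ideal_lift (I : set P) q : is_ideal I -> (forall a, phi q a -> I (h a)) -> I (lift q).
Proof.
by move=> idI Ih; apply: ideal_joins => // a agens; apply: Ih; rewrite phi_gens; exists a.
Qed.

End Lift.

Lemma lift_principal q : lift principal q = q.
Proof.
apply/le_anti/andP; split; first by apply: lift_le => a /le_principal.
by apply/phi_le => a qa; apply/le_principal; exact: (lift_ub principal_homo qa).
Qed.

Definition sub_phi (D : set R) : set Q := [set q | phi q `<=` D].

Lemma is_ideal_sub_phi D : is_ideal (sub_phi D).
Proof.
split; first by exists \bot; rewrite /sub_phi /= phi0.
  by move=> q1 q2 /phi_le le21 sub1; apply: subset_trans sub1.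
move=> q1 q2 sub1 sub2; exists (q1 `|` q2); split; rewrite ?leUl ?leUr //.
by rewrite /sub_phi /= phiU => a [/sub1 | /sub2].
Qed.

Definition ideal_sub_phi D : ideal_of Q := exist _ _ (is_ideal_sub_phi D).

Definition atoms (I : ideal_of Q) : set R := [set a | sval I (principal a)].

Lemma ideal_atomsP (I : ideal_of Q) q : sval I q <-> phi q `<=` atoms I.
Proof.
split=> [Iq a /le_principal aq | sub]; first exact: ideal_downclosed Iq.
rewrite -(lift_principal q); apply: ideal_lift (svalP I) _.
by move=> a /sub.
Qed.

Lemma ideal_le_atoms (I J : ideal_of Q) : ideal_le I J <-> atoms I `<=` atoms J.
Proof.
split=> [IJ a /IJ // | sub q /ideal_atomsP Iq].
by apply/ideal_atomsP; apply: subset_trans sub.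
Qed.

Lemma atoms_lub (X : set (ideal_of Q)) I :
  is_lub (@ideal_le _ Q) X I -> atoms I `<=` \bigcup_(J in X) atoms J.
Proof.
case=> _ Imin a Ia.
have Ia' : sval (ideal_sub_phi (\bigcup_(J in X) atoms J)) (principal a).
  by apply: Imin Ia => J XJ q /ideal_atomsP qJ b /qJ Jb; exists J.
by apply: Ia'; apply/le_principal.
Qed.

Lemma emb_poset_finjoin dP (P : bJoinSemilatticeType dP) :
  emb_poset Q P -> emb_finjoin Q P.
Proof.
case=> f f_le; pose h a := f (principal a).
have h_homo : {homo h : a b / a <= b} by move=> a b /principal_homo /f_le.
have lift_le_f q : lift h q <= f q by apply: lift_le => a /le_principal /f_le.
have lift_refl q1 q2 : lift h q1 <= lift h q2 -> q1 <= q2.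
  move=> le12; apply/phi_le => a /(lift_ub h_homo) ha.
  by apply/le_principal/f_le; exact: le_trans ha (le_trans le12 (lift_le_f q2)).
exists (lift h); split; last exact: lift_fin_join.
by move=> q1 q2 E; apply: le_anti; rewrite !lift_refl ?E.
Qed.

Lemma emb_ideal_poset_join dP (P : bJoinSemilatticeType dP) :
  emb_ideal_poset Q P -> emb_ideal_join Q P.
Proof.
case=> F F_le.
pose G I := span_ideal (\bigcup_(a in atoms I) sval (F (ideal_down (principal a)))).
have G_sub I : ideal_le (G I) (F I).
  apply: ideal_span_min (svalP (F I)) _ => p [a Ia]; apply: ((F_le _ I).1 _ p).
  exact/ideal_down_le.
have G_homo I J : ideal_le I J -> ideal_le (G I) (G J).
  move=> /ideal_le_atoms IJ; apply: ideal_span_min (svalP (G J)) _ => p [a /IJ Ja Fp].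
  by apply: sub_ideal_span; exists a.
have G_refl I J : ideal_le (G I) (G J) -> ideal_le I J.
  move=> GIJ; apply/ideal_le_atoms => a Ia; apply/ideal_down_le/F_le => p Fp.
  by apply: G_sub; apply: GIJ; apply: sub_ideal_span; exists a.
exists G; split=> [I J GIJ | X I [Iub Imin]].
  by apply: ideal_le_anti; apply: G_refl; rewrite GIJ.
split=> [_ [J XJ <-] | B Bub]; first exact/G_homo/Iub.
apply: ideal_span_min (svalP B) _ => p [a /(atoms_lub (conj Iub Imin)) [J XJ Ja] Fp].
by apply: (Bub (G J)); [exists J | apply: sub_ideal_span; exists a].
Qed.

Lemma emb_ideal_poset_poset dP (P : bJoinSemilatticeType dP) :
  (forall x : R, finite_set [set y | y <= x]) ->
  emb_ideal_poset Q P -> emb_poset Q P.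
Proof.
move=> finR [F F_le].
pose not_above a := ideal_sub_phi [set y | ~ a <= y].
have witness a : exists p, sval (F (ideal_down (principal a))) p /\ ~ sval (F (not_above a)) p.
  apply: contrapT => no_witness.
  have /F_le/ideal_down_le sub : ideal_le (F (ideal_down (principal a))) (F (not_above a)).
    by move=> p Fp; apply: contrapT => Fp'; apply: no_witness; exists p.
  by apply: (sub a); [apply/le_principal | ].
pose p a := sval (cid (witness a)).
have [below belowE] := finite_below_seq finR.
pose h x := \join_(a <- below x) p a.
have h_homo : {homo h : x y / x <= y}.
  move=> x y xy; apply/joinsP_seq => a; rewrite belowE => ax _.
  by apply: joins_sup_seq; rewrite // belowE (le_trans ax xy).
have h_in x : sval (F (ideal_down (principal x))) (h x).
  apply: ideal_joins (svalP _) _ => a; rewrite belowE => ax.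
  apply: ((F_le _ _).1 _ _ (svalP (cid (witness a))).1).
  by apply/ideal_down_le; apply: principal_homo.
have p_le_h x : p x <= h x by apply: joins_sup_seq; rewrite // belowE.
exists (lift h) => q1 q2; split; first exact: lift_homo.
move=> le12; apply/phi_le => a a1; apply: contrapT => a2.
have in2 : sval (F (ideal_down q2)) (lift h q2).
  apply: ideal_lift (svalP _) _ => x x2; apply: ((F_le _ _).1 _ _ (h_in x)).
  by apply/ideal_down_le/le_principal.
have sub : ideal_le (ideal_down q2) (not_above a).
  by move=> q /phi_le q2q b /q2q bq ab; apply: a2; exact: phi_downclosed ab bq.
apply: (svalP (cid (witness a))).2; apply: ((F_le _ _).1 sub).
apply: ideal_downclosed in2; apply: le_trans (p_le_h a) _.
exact: le_trans (lift_ub h_homo a1) le12.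
Qed.

End FinitelyGeneratedDownsets.

Theorem proposition1p3 (dP dQ : Order.disp_t)
    (P : bJoinSemilatticeType dP) (Q : bJoinSemilatticeType dQ) :
  (emb_join Q P <-> emb_finjoin Q P) /\
  (emb_join Q P -> emb_ideal_join Q P) /\
  (forall (dR : Order.disp_t) (R : porderType dR), is_Ifin Q R ->
     [/\ emb_poset Q P <-> emb_finjoin Q P,
         emb_ideal_poset Q P <-> emb_ideal_join Q P &
         ((forall x : R, finite_set [set y : R | (y <= x)%O]) ->
            (emb_poset Q P <-> emb_ideal_poset Q P))]).
Proof.
split; first exact: emb_join_finjoin.
split; first exact: emb_join_ideal_join.
move=> dR R [phi [phi_fg phi_onto phi_le]]; split.
- split; last exact: emb_finjoin_poset.
  exact: (emb_poset_finjoin (P := P) phi_fg phi_onto phi_le).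
- split; last exact: emb_ideal_join_poset.
  exact: (emb_ideal_poset_join (P := P) phi_fg phi_onto phi_le).
- move=> finR; split; last exact: (emb_ideal_poset_poset (P := P) phi_fg phi_onto phi_le finR).
  move=> /(emb_poset_finjoin (P := P) phi_fg phi_onto phi_le) /emb_join_finjoin.
  by move=> /emb_join_ideal_join /emb_ideal_join_poset.
Qed.
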